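(* Let $\mu_0,\mu_1,\dots,\mu_\ell$ be the sequence of distributions obtained by applying a sequence of lossy moves $v_1^\downarrow,\dots,v_\ell^\downarrow$ to $\mu_0$. Then there is a sequence of distributions $\mu'_0,\mu'_1,\dots,\mu'_\ell$ obtained from $\mu'_0=\mu_0$ by a weight-constrained sequence of moves such that $\mu'_i(\{x\})\ge\mu_i(\{x\})$ for every $1\le i\le\ell$ and every $x\in\mathbb R$.
   Context: A distribution is a finite set $\{(x_1,m_1),\dots,(x_k,m_k)\}$ with $m_i>0$; signed distributions allow arbitrary real $m_i$; $\mu(A)=\sum_{x_i\in A}m_i$; $M_j[\mu]=\sum_i m_ix_i^j$. A move $v=([a,b],\delta)$ has $b-a=1$, $\delta$ a signed distribution on $[a,b]$ with $M_0[\delta]=M_1[\delta]=0$, center $\frac{a+b}2$; it can be applied to $\mu$ if $\mu+\delta$ is a distribution, giving $v\mu=\mu+\delta$. The lossy move $v^\downarrow=([a,b],\delta-\{(\frac{a+b}2,1)\})$ is applied analogously. For a sequence of moves producing $\mu_0,\dots,\mu_\ell$, $\mu_{\max}\{x>a\}=\max_i\mu_i\{x>a\}$; the sequence is weight-constrained if for every $a\in\mathbb R$ the number of its moves centered in $(a,\infty)$ is at most $\mu_{\max}\{x>a\}$. *)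

From Stdlib Require Import Reals Lra List.
Import ListNotations.
Open Scope R_scope.

(* A signed distribution is represented by a finite list of (point, mass)
   pairs; repeated points are allowed and their masses add up.  Thus the
   list represents the signed distribution x |-> mass d x (zero masses
   being dropped), and the sum of signed distributions is list concatenation. *)
Definition sdist := list (R * R).

Definition mass (d : sdist) (x : R) : R :=
  fold_right (fun p s => (if Req_EM_T (fst p) x then snd p else 0) + s) 0 d.

Definition mass_gt (d : sdist) (a : R) : R :=
  fold_right (fun p s => (if Rlt_dec a (fst p) then snd p else 0) + s) 0 d.

Definition moment (j : nat) (d : sdist) : R :=
  fold_right (fun p s => snd p * (fst p) ^ j + s) 0 d.

(* A (nonnegative) distribution: every point carries nonnegative total mass,
   i.e. after merging equal points and dropping zero masses, all masses are > 0. *)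
Definition is_dist (d : sdist) : Prop := forall x, mass d x >= 0.

(* A move ([a, a+1], delta) is represented by the pair (a, delta). *)
Definition move := (R * sdist)%type.
Definition mv_left (v : move) : R := fst v.
Definition mv_delta (v : move) : sdist := snd v.
Definition center (v : move) : R := mv_left v + 1 / 2.

Definition valid_move (v : move) : Prop :=
  (forall p, In p (mv_delta v) -> mv_left v <= fst p <= mv_left v + 1) /\
  moment 0 (mv_delta v) = 0 /\ moment 1 (mv_delta v) = 0.

Definition lossy_delta (v : move) : sdist :=
  mv_delta v ++ [(center v, -1)].

Fixpoint dists_of (mu : sdist) (ds : list sdist) : list sdist :=
  mu :: match ds with
        | [] => []
        | d :: ds' => dists_of (mu ++ d) ds'
        end.

Fixpoint applicable (mu : sdist) (ds : list sdist) : Prop :=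
  match ds with
  | [] => True
  | d :: ds' => is_dist (mu ++ d) /\ applicable (mu ++ d) ds'
  end.

Definition seq_moves (mu0 : sdist) (vs : list move) : list sdist :=
  dists_of mu0 (map mv_delta vs).
Definition seq_lossy (mu0 : sdist) (vs : list move) : list sdist :=
  dists_of mu0 (map lossy_delta vs).

Definition mu_max_gt (mus : list sdist) (a : R) : R :=
  fold_right (fun d m => Rmax (mass_gt d a) m) 0 mus.

Definition count_centered_gt (vs : list move) (a : R) : nat :=
  length (filter (fun v => if Rlt_dec a (center v) then true else false) vs).

Definition weight_constrained (mu0 : sdist) (vs : list move) : Prop :=
  forall a : R, INR (count_centered_gt vs a) <= mu_max_gt (seq_moves mu0 vs) a.

From Stdlib Require Import Reals List Lra Lia.
Import ListNotations.
Open Scope R_scope.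

(* The lossy move v^down differs from v only by removing one unit
   of mass at the center of v.  Hence, replaying the SAME moves without loss
   from mu_0 yields distributions mu'_i that dominate the lossy ones pointwise
   (mu'_i{x} >= mu_i{x}); in particular every mu'_i is a distribution, so the
   lossless moves can be applied.  For the weight constraint, fix a: the
   lossless run exceeds the lossy run on {x > a} by exactly the number of moves
   applied so far that are centered in (a, oo), so at the final step
     mu'_l{x > a} = mu_l{x > a} + #(moves centered > a) >= #(moves centered > a),
   using that a genuine distribution gives nonnegative mass to {x > a}. *)

Lemma mass_app (d1 d2 : sdist) (x : R) : mass (d1 ++ d2) x = mass d1 x + mass d2 x.
Proof. induction d1 as [|p d IH]; simpl; [lra|]. unfold mass in *; simpl. rewrite IH; lra. Qed.

Lemma mass_gt_app (d1 d2 : sdist) (a : R) :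
  mass_gt (d1 ++ d2) a = mass_gt d1 a + mass_gt d2 a.
Proof. induction d1 as [|p d IH]; simpl; [lra|]. unfold mass_gt in *; simpl. rewrite IH; lra. Qed.

Definition remove_point (y : R) (d : sdist) : sdist :=
  filter (fun q => if Req_EM_T (fst q) y then false else true) d.

Lemma mass_remove_point (y : R) (d : sdist) (x : R) :
  mass (remove_point y d) x = if Req_EM_T x y then 0 else mass d x.
Proof.
  induction d as [|[z m] d IH]; simpl.
  - destruct (Req_EM_T x y); reflexivity.
  - unfold remove_point in *; simpl.
    destruct (Req_EM_T z y); unfold mass in *; simpl; rewrite ?IH;
      destruct (Req_EM_T x y); destruct (Req_EM_T z x); subst; try lra; congruence.
Qed.

Lemma mass_gt_remove_point (y : R) (d : sdist) (a : R) :
  mass_gt d a = (if Rlt_dec a y then mass d y else 0) + mass_gt (remove_point y d) a.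
Proof.
  induction d as [|[z m] d IH]; simpl.
  - unfold mass, mass_gt; simpl; destruct (Rlt_dec a y); lra.
  - unfold remove_point in *; simpl.
    destruct (Req_EM_T z y) as [->|Nzy]; unfold mass_gt, mass in *; simpl; rewrite IH.
    + destruct (Req_EM_T y y); [|congruence]. destruct (Rlt_dec a y); lra.
    + destruct (Req_EM_T z y); [congruence|]. destruct (Rlt_dec a y); lra.
Qed.

(* A distribution gives nonnegative mass to every half-line {x > a}: peel off
   the atoms one location at a time, each carrying nonnegative total mass. *)
Lemma mass_gt_nonneg (d0 : sdist) (a : R) : is_dist d0 -> mass_gt d0 a >= 0.
Proof.
  assert (Hlen : forall n (d : sdist), (length d <= n)%nat -> is_dist d -> mass_gt d a >= 0).
  { induction n as [|n IH]; intros [|[y m] d] Hn Hd; try (unfold mass_gt; simpl; lra);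
      simpl in Hn; [lia|].
    rewrite (mass_gt_remove_point y).
    assert (Hrest : mass_gt (remove_point y ((y, m) :: d)) a >= 0).
    { apply IH.
      - unfold remove_point; simpl. destruct (Req_EM_T y y); [|congruence].
        pose proof (filter_length_le
          (fun q : R * R => if Req_EM_T (fst q) y then false else true) d).
        lia.
      - intro x; rewrite mass_remove_point. destruct (Req_EM_T x y); [lra | apply Hd]. }
    specialize (Hd y). destruct (Rlt_dec a y); lra. }
  intro Hd; exact (Hlen _ d0 (le_n _) Hd).
Qed.

Definition dominates (nu mu : sdist) : Prop := forall x, mass nu x >= mass mu x.

Lemma dominates_app (nu mu d e : sdist) :
  dominates nu mu -> dominates d e -> dominates (nu ++ d) (mu ++ e).
Proof. intros H1 H2 x. rewrite !mass_app. specialize (H1 x); specialize (H2 x); lra. Qed.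

Lemma delta_dominates_lossy (v : move) : dominates (mv_delta v) (lossy_delta v).
Proof.
  intro x. unfold lossy_delta. rewrite mass_app. unfold mass at 3; simpl.
  destruct (Req_EM_T (center v) x); lra.
Qed.

Lemma lossless_dominates_lossy (vs : list move) :
  Forall2 dominates (map mv_delta vs) (map lossy_delta vs).
Proof. induction vs; constructor; auto using delta_dominates_lossy. Qed.

Lemma dists_of_dominates (ds es : list sdist) :
  Forall2 dominates ds es -> forall nu mu, dominates nu mu ->
  forall i, dominates (nth i (dists_of nu ds) []) (nth i (dists_of mu es) []).
Proof.
  induction 1 as [|d e ds es Hde _ IH]; intros nu mu Hnm [|i]; simpl; auto.
  - destruct i as [|i]; intro x; unfold mass; simpl; lra.
  - apply IH, dominates_app; assumption.
Qed.

Lemma applicable_dominates (ds es : list sdist) :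
  Forall2 dominates ds es -> forall nu mu, dominates nu mu ->
  applicable mu es -> applicable nu ds.
Proof.
  induction 1 as [|d e ds es Hde _ IH]; intros nu mu Hnm; simpl; auto.
  intros [Hdist Happ].
  assert (Hstep : dominates (nu ++ d) (mu ++ e)) by (apply dominates_app; assumption).
  split; [|exact (IH _ _ Hstep Happ)].
  intro x; specialize (Hdist x); specialize (Hstep x); lra.
Qed.

Definition centered_gt (v : move) (a : R) : R := if Rlt_dec a (center v) then 1 else 0.

Lemma mass_gt_lossy (v : move) (a : R) :
  mass_gt (mv_delta v) a = mass_gt (lossy_delta v) a + centered_gt v a.
Proof.
  unfold lossy_delta, centered_gt. rewrite mass_gt_app. unfold mass_gt at 3; simpl.
  destruct (Rlt_dec a (center v)); lra.
Qed.

Lemma count_centered_gt_cons (v : move) (vs : list move) (a : R) :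
  INR (count_centered_gt (v :: vs) a) = centered_gt v a + INR (count_centered_gt vs a).
Proof.
  unfold count_centered_gt, centered_gt; cbn [filter].
  destruct (Rlt_dec a (center v)); cbn [length]; [rewrite S_INR|]; lra.
Qed.

(* Excess invariant: if the lossless run starts with an excess k on {x > a}, its
   maximal mass on {x > a} is at least k plus the number of moves centered > a,
   since the excess grows by one with each such move and the final lossy
   distribution has nonnegative mass there. *)
Lemma mu_max_gt_lossless (vs : list move) : forall (mu nu : sdist) (a k : R),
  mass_gt nu a >= mass_gt mu a + k -> is_dist mu ->
  applicable mu (map lossy_delta vs) ->
  mu_max_gt (dists_of nu (map mv_delta vs)) a >= k + INR (count_centered_gt vs a).
Proof.
  induction vs as [|v vs IH]; intros mu nu a k Hk Hmu Happ; simpl in *.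
  - pose proof (mass_gt_nonneg mu a Hmu). pose proof (Rmax_l (mass_gt nu a) 0).
    unfold count_centered_gt; simpl; lra.
  - destruct Happ as [Hdist Happ].
    assert (Hstep : mass_gt (nu ++ mv_delta v) a
                    >= mass_gt (mu ++ lossy_delta v) a + (k + centered_gt v a)).
    { rewrite !mass_gt_app, mass_gt_lossy; lra. }
    pose proof (IH _ _ a _ Hstep Hdist Happ).
    pose proof (Rmax_r (mass_gt nu a)
                  (mu_max_gt (dists_of (nu ++ mv_delta v) (map mv_delta vs)) a)).
    rewrite count_centered_gt_cons; lra.
Qed.

Theorem mainTheorem8 (mu0 : sdist) (vs : list move) :
  is_dist mu0 ->
  Forall valid_move vs ->
  applicable mu0 (map lossy_delta vs) ->
  exists ws : list move,
    length ws = length vs /\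
    Forall valid_move ws /\
    applicable mu0 (map mv_delta ws) /\
    weight_constrained mu0 ws /\
    (forall (i : nat) (x : R), (1 <= i <= length vs)%nat ->
       mass (nth i (seq_moves mu0 ws) []) x >= mass (nth i (seq_lossy mu0 vs) []) x).
Proof.
  intros Hmu0 Hvalid Happ. exists vs.
  assert (Hrefl : dominates mu0 mu0) by (intro; lra).
  pose proof (lossless_dominates_lossy vs) as Hsteps.
  split; [reflexivity|]. split; [exact Hvalid|]. split; [|split].
  - exact (applicable_dominates _ _ Hsteps _ _ Hrefl Happ).
  - intro a. pose proof (mu_max_gt_lossless vs mu0 mu0 a 0 ltac:(lra) Hmu0 Happ).
    unfold seq_moves; lra.
  - intros i x _. exact (dists_of_dominates _ _ Hsteps _ _ Hrefl i x).
Qed.
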